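(* Let $\alpha>-1$ and $W(x,y)=\dfrac{x^{\alpha}y^{\alpha+1}e^{-x-y}}{x+y}$ on $(0,\infty)^2$. Let $\{p_k\}$, $\{q_k\}$ be the monic Cauchy–Laguerre biorthogonal polynomials ($\deg p_k=\deg q_k=k$, monic, $\int_0^\infty\!\int_0^\infty p_k(x)q_l(y)W(x,y)\,dx\,dy=h_k\delta_{kl}$). Write $p_k(x)=\sum_{i=0}^k a_{k,i}x^i$ and $q_k(y)=\sum_{i=0}^k\hat a_{k,i}y^i$ with $a_{k,k}=\hat a_{k,k}=1$. Define $b_{\beta,0}=\hat b_{\beta,0}=1$ and, for $1\le i\le\beta$, $b_{\beta,i}=-\sum_{j=0}^{i-1}b_{\beta,j}a_{\beta-j,\beta-i}$ and $\hat b_{\beta,i}=-\sum_{j=0}^{i-1}\hat b_{\beta,j}\hat a_{\beta-j,\beta-i}$, with the convention $b_{\beta,i}=\hat b_{\beta,i}=0$ for $i<0$. Then for all $\beta,k,j\in\mathbb{N}$, $$\frac{1}{h_j}\int_0^\infty\!\!\int_0^\infty x^{\beta}p_k(x)q_j(y)W(x,y)\,dx\,dy=\sum_{\ell=0}^{k}a_{k,\ell}\,b_{\beta+\ell,\beta+\ell-j},$$ $$\frac{1}{h_j}\int_0^\infty\!\!\int_0^\infty y^{\beta}p_j(x)q_k(y)W(x,y)\,dx\,dy=\sum_{\ell=0}^{k}\hat a_{k,\ell}\,\hat b_{\beta+\ell,\beta+\ell-j}.$$ *)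

From HB Require Import structures.
From mathcomp Require Import all_boot all_order all_algebra.
From mathcomp Require Import all_classical all_reals all_analysis.
Set Implicit Arguments. Unset Strict Implicit. Unset Printing Implicit Defensive.
Import Order.TTheory GRing.Theory Num.Theory.
Import numFieldNormedType.Exports.
Local Open Scope classical_set_scope.
Local Open Scope ring_scope.

Definition CLweight (R : realType) (a : R) (x y : R) : R :=
  x `^ a * y `^ (a + 1) * expR (- x - y) / (x + y).

Definition leb2 (R : realType) :=
  ((@lebesgue_measure R) \x (@lebesgue_measure R))%E.

Definition CLint (R : realType) (a : R) (f : R -> R -> R) : R :=
  Rintegral (@leb2 R) (`]0, +oo[%classic `*` `]0, +oo[%classic)
    (fun z : R * R => f z.1 z.2 * CLweight a z.1 z.2).

Definition CL_biorthogonal (R : realType) (a : R) (p q : nat -> {poly R})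
  (h : nat -> R) : Prop :=
  [/\ forall k, p k \is monic /\ size (p k) = k.+1,
      forall k, q k \is monic /\ size (q k) = k.+1,
      forall k l, CLint a (fun x y => (p k).[x] * (q l).[y]) =
                  (if k == l then h k else 0)
    & forall k, h k != 0].

(* Given coefficients c k i (= a_{k,i}), the list [b_{beta,0}; ...; b_{beta,n}]
   b_{beta,0} = 1, b_{beta,i} = - sum_{j<i} b_{beta,j} c (beta-j) (beta-i). *)
Fixpoint bseq (R : nzRingType) (c : nat -> nat -> R) (beta n : nat) : seq R :=
  match n with
  | 0 => [:: 1]
  | n'.+1 => let s := bseq c beta n' in
      rcons s (- \sum_(j < n'.+1) s`_j * c (beta - j)%N (beta - n'.+1)%N)
  end.

Definition bcoef (R : nzRingType) (c : nat -> nat -> R) (beta : nat) (i : int) : R :=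
  match i with
  | Posz n => (bseq c beta n)`_n
  | Negz _ => 0
  end.

(* Since deg p_m = m and p_m is monic, the p_m form a triangular basis of R[X];
   the recursion defining b_{n,i} says exactly that X^n = sum_i b_{n,i} p_{n-i}.
   By biorthogonality the linear form P |-> int int P(x) q_j(y) W(x,y) sends
   p_m to [m = j] h_j, so it sends X^n to b_{n,n-j} h_j, and expanding
   x^beta p_k(x) = sum_l a_{k,l} x^{beta+l} gives the first identity; the
   second is symmetric.  The analytic input is that this form is well defined
   and linear: as y/(x+y) <= 1, x^i y^j W(x,y) is dominated by the product
   x^(alpha+i) e^-x * y^(alpha+j) e^-y of two Gamma integrands, which are
   integrable on ]0,+oo[ because alpha > -1. *)

From Pilot Require Import Defs.
From HB Require Import structures.
From mathcomp Require Import all_boot all_order all_algebra.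
From mathcomp Require Import all_classical all_reals all_analysis.
From mathcomp Require Import measurable_realfun ring zify.
Set Implicit Arguments. Unset Strict Implicit. Unset Printing Implicit Defensive.
Import Order.TTheory GRing.Theory Num.Theory.
Local Open Scope ring_scope.

Section InverseCoefficients.
Variables (R : nzRingType) (c : nat -> nat -> R).

Definition bcoefn (beta i : nat) : R := (Defs.bseq c beta i)`_i.

Lemma size_bseq beta n : size (Defs.bseq c beta n) = n.+1.
Proof. by elim: n => //= n IHn; rewrite size_rcons IHn. Qed.

Lemma nth_bseq beta n i : (i <= n)%N -> (Defs.bseq c beta n)`_i = bcoefn beta i.
Proof.
elim: n => [|n IHn]; first by rewrite leqn0 => /eqP ->.
rewrite leq_eqVlt => /orP[/eqP -> //|]; rewrite ltnS => le_in.
by rewrite /= nth_rcons size_bseq ltnS le_in IHn.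
Qed.

Lemma bcoefn0 beta : bcoefn beta 0 = 1.
Proof. by []. Qed.

Lemma bcoefnS beta i :
  bcoefn beta i.+1 = - \sum_(j < i.+1) bcoefn beta j * c (beta - j) (beta - i.+1).
Proof.
rewrite /bcoefn /= nth_rcons size_bseq ltnn eqxx.
by congr (- _); apply: eq_bigr => j _; rewrite nth_bseq // -ltnS.
Qed.

Lemma bcoef_subz beta j :
  bcoef c beta (beta%:Z - j%:Z) = if (j <= beta)%N then bcoefn beta (beta - j) else 0.
Proof.
case: leqP => [le_jb|lt_bj]; first by rewrite subzn.
rewrite -opprB subzn 1?ltnW //.
by move: lt_bj; rewrite -subn_gt0; case: (j - beta)%N.
Qed.

End InverseCoefficients.

Section MonicBasis.
Variables (R : nzRingType) (r : nat -> {poly R}).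
Hypothesis r_monic : forall m, r m \is monic.
Hypothesis size_r : forall m, size (r m) = m.+1.

Local Notation c := (fun m i => (r m)`_i).

Lemma coef_basis_deg m : (r m)`_m = 1.
Proof. by have /monicP := r_monic m; rewrite lead_coefE size_r. Qed.

Lemma coef_basis_gt m i : (m < i)%N -> (r m)`_i = 0.
Proof. by move=> lt_mi; rewrite nth_default // size_r. Qed.

Lemma sum_bcoefn_coef_basis n k :
  \sum_(i < k.+1) bcoefn c n i * (r (n - i))`_(n - k) = (k == 0)%:R.
Proof.
case: k => [|k]; first by rewrite big_ord1 bcoefn0 mul1r coef_basis_deg.
by rewrite big_ord_recr /= bcoefnS coef_basis_deg mulr1 addrN.
Qed.

Lemma polyXn_bcoefn n : 'X^n = \sum_(i < n.+1) bcoefn c n i *: r (n - i).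
Proof.
apply/polyP => m; rewrite coefXn coef_sum.
under eq_bigr do rewrite coefZ.
have [le_mn|lt_nm] := leqP m n; last first.
  rewrite gtn_eqF // big1 // => i _.
  by rewrite coef_basis_gt ?mulr0 // (leq_ltn_trans (leq_subr _ _)).
rewrite -[m](subKn le_mn); move: (n - m)%N (leq_subr m n) => k le_kn.
rewrite -(big_mkord xpredT (fun i => bcoefn c n i * (r (n - i))`_(n - k))).
rewrite (big_cat_nat _ (n := k.+1)) //= ?ltnS // big_mkord sum_bcoefn_coef_basis.
rewrite big1_seq ?addr0; first by congr (_%:R); apply/eqP/eqP; lia.
move=> i; rewrite mem_index_iota => /andP[lt_ki lt_in].
by rewrite coef_basis_gt ?mulr0 //; lia.
Qed.

End MonicBasis.

Section BiorthogonalFunctional.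
Variables (R : comNzRingType) (r : nat -> {poly R}).
Hypothesis r_monic : forall m, r m \is monic.
Hypothesis size_r : forall m, size (r m) = m.+1.
Variables (F : {poly R} -> R) (j : nat) (h : R).
Hypothesis F_linear : linear_for *%R F.
Hypothesis F_r : forall m, F (r m) = if m == j then h else 0.

Local Notation c := (fun m i => (r m)`_i).

Lemma lform0 : F 0 = 0.
Proof. by have := F_linear (-1) 0 0; rewrite scaler0 addr0 mulN1r addNr. Qed.

Lemma lformZ a P : F (a *: P) = a * F P.
Proof. by rewrite -[a *: P]addr0 F_linear lform0 addr0. Qed.

Lemma lform_sum I (s : seq I) (G : I -> {poly R}) :
  F (\sum_(i <- s) G i) = \sum_(i <- s) F (G i).
Proof.
apply: (big_morph F _ lform0) => P Q.
by rewrite -[P + Q](congr1 (+%R^~ Q) (scale1r P)) F_linear mul1r.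
Qed.

Lemma lform_Xn n : F 'X^n = bcoef c n (n%:Z - j%:Z) * h.
Proof.
rewrite (polyXn_bcoefn r_monic size_r) lform_sum bcoef_subz.
under eq_bigr do rewrite lformZ F_r.
case: leqP => [le_jn|lt_nj]; last first.
  by rewrite mul0r big1 // => i _; case: eqP => [?|_]; [lia|rewrite mulr0].
rewrite (bigD1 (Ordinal (leq_ltn_trans (leq_subr j n) (ltnSn n)))) //=.
rewrite subKn // eqxx big1 ?addr0 // => i ne_i.
case: eqP => [eq_j|_]; last by rewrite mulr0.
by case/eqP: ne_i; apply: val_inj => /=; have := ltn_ord i; lia.
Qed.

Lemma lform_XnM beta k : F ('X^beta * r k) =
  (\sum_(l < k.+1) (r k)`_l * bcoef c (beta + l) ((beta + l)%:Z - j%:Z)) * h.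
Proof.
rewrite -{1}[r k]coefK poly_def size_r mulr_sumr lform_sum mulr_suml.
by apply: eq_bigr => l _; rewrite -scalerAr -exprD lformZ lform_Xn mulrA.
Qed.

End BiorthogonalFunctional.

Local Open Scope classical_set_scope.
Import numFieldNormedType.Exports.

Section GammaIntegrand.
Context {R : realType}.
Local Notation mu := (@lebesgue_measure R).
Implicit Types s x : R.

Lemma continuous_powR s x : 0 < x -> {for x, continuous (@powR R ^~ s)}.
Proof.
move=> x_gt0; apply: differentiable_continuous; apply/derivable1_diffP.
by apply: derivable_powR; rewrite in_itv /= andbT.
Qed.

Lemma integral_powR_itvcc1 s e : -1 < s -> 0 < e -> e < 1 ->
  (\int[mu]_(x in `[e, 1%R]) ((s + 1) * x `^ s)%:E)%E = (1 - e `^ (s + 1))%:E.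
Proof.
move=> s_gtN1 e_gt0 e_lt1; have one_powR : 1 = 1 `^ (s + 1) :> R by rewrite powR1.
rewrite EFinB [X in (X%:E - _)%E]one_powR.
apply: (@continuous_FTC2 _ (fun x => (s + 1) * x `^ s) (@powR R ^~ (s + 1))) => //.
- apply: continuous_in_subspaceT => x; rewrite inE /= in_itv /= => /andP[le_ex _].
  apply: (@continuousM _ R^o (fun=> s + 1) (@powR R ^~ s)); first exact: cst_continuous.
  exact/continuous_powR/(lt_le_trans e_gt0).
- split.
  + move=> x; rewrite in_itv /= => /andP[lt_ex _].
    by apply: derivable_powR; rewrite in_itv /= (lt_trans e_gt0).
  + exact/cvg_at_right_filter/continuous_powR.
  + exact/cvg_at_left_filter/continuous_powR/(lt_trans e_gt0).
- move=> x; rewrite in_itv /= => /andP[lt_ex _].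
  by rewrite powR_derive1 ?addrK // in_itv /= andbT (lt_trans e_gt0).
Qed.

Lemma itvoc01_bigcup : `]0, 1%R]%classic = \bigcup_n `[n.+2%:R^-1, 1%R]%classic :> set R.
Proof.
apply/seteqP; split => x /=; last first.
  by move=> [n _]; rewrite /= !in_itv /= => /andP[+ ->]; rewrite andbT; apply: lt_le_trans.
rewrite in_itv /= => /andP[x_gt0 x_le1].
exists (Num.Def.trunc x^-1) => //=; rewrite in_itv /= x_le1 andbT.
rewrite -[leRHS]invrK lef_pV2 ?posrE ?invr_gt0 ?ltr0n //.
by apply: le_trans (ltW (truncnS_gt _)) _; rewrite ler_nat.
Qed.

Lemma integrable_powR_itvoc01 s : -1 < s ->
  mu.-integrable `]0, 1%R] (fun x => (x `^ s)%:E).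
Proof.
move=> s_gtN1; have s1_gt0 : 0 < s + 1 by rewrite -ltrBlDr sub0r.
pose f x := (s + 1) * x `^ s.
have f_ge0 x : 0 <= f x by rewrite mulr_ge0 ?powR_ge0 ?ltW.
have mf : measurable_fun setT f.
  by apply: measurable_funM => //; exact: measurable_powR.
have int_f_le1 : (\int[mu]_(x in `]0%R, 1%R]) (f x)%:E <= 1)%E.
  pose I n := `[n.+2%:R^-1, 1%R]%classic : set R.
  have int_f_cvg : ((\int[mu]_(x in I n) (f x)%:E)%E @[n --> \oo] -->
      (\int[mu]_(x in \bigcup_n I n) (f x)%:E)%E)%classic.
    apply: ge0_nondecreasing_set_cvg_integral => //.
    - move=> m n le_mn; rewrite subsetEset => x; rewrite /I /= !in_itv /=.
      move=> /andP[+ ->]; rewrite andbT; apply: le_trans.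
      by rewrite lef_pV2 ?posrE ?ltr0n // ler_nat.
    - by move=> n; exact: measurable_itv.
    - by move=> n; apply/measurable_funTS/measurable_EFinP.
    - by move=> n x _; rewrite lee_fin.
  rewrite itvoc01_bigcup -(cvg_lim _ int_f_cvg) //.
  apply: lime_le; first by apply/cvg_ex; eexists; exact: int_f_cvg.
  apply: nearW => n; rewrite integral_powR_itvcc1 ?invr_gt0 ?ltr0n ?invf_lt1 ?ltr1n //.
  by rewrite lee_fin lerBlDr lerDl powR_ge0.
have int_f : mu.-integrable `]0, 1%R] (EFin \o f).
  apply/integrableP; split; first exact/measurable_funTS/measurable_EFinP.
  under eq_integral do rewrite gee0_abs ?lee_fin //.
  exact: le_lt_trans int_f_le1 (ltry 1).
apply: eq_integrable (integrableZl _ (s + 1)^-1 int_f) => //= x _.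
by rewrite -EFinM /f mulrA mulVf ?mul1r ?gt_eqF.
Qed.

Lemma exprn_le_expR n x : 0 <= x -> x ^+ n <= n`!%:R * expR x.
Proof.
case: n => [|n] x_ge0.
  by rewrite expr0 mul1r (le_trans _ (expR_ge1Dx x)) // lerDl.
have fact_pos : 0 < n.+1`!%:R :> R by rewrite ltr0n fact_gt0.
rewrite mulrC -ler_pdivrMr //; apply: le_trans (expR_ge1Dxn n x_ge0).
by rewrite lerDr.
Qed.

Lemma powR_expRN_le s : exists2 C, 0 <= C & forall x, 1 <= x ->
  x `^ s * expR (- x) <= C * expR (- (x / 2)).
Proof.
set N := (Num.Def.trunc `|s|).+1.
exists (2 ^+ N * N`!%:R) => [|x x_ge1]; first by rewrite mulr_ge0 ?exprn_ge0.
have x_ge0 : 0 <= x := le_trans ler01 x_ge1.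
have powR_le : x `^ s <= x ^+ N.
  rewrite -powR_mulrn // ler_powR //.
  exact: le_trans (ler_norm s) (ltW (truncnS_gt _)).
have exprn_le : x ^+ N <= 2 ^+ N * N`!%:R * expR (x / 2).
  rewrite -[x in x ^+ N](@divfK _ 2) ?pnatr_eq0 // exprMn mulrC -mulrA.
  by rewrite ler_wpM2l ?exprn_ge0 ?exprn_le_expR ?divr_ge0.
apply: le_trans (ler_wpM2r (expR_ge0 _) (le_trans powR_le exprn_le)) _.
by rewrite -[_ * expR (- x)]mulrA -expRD (_ : x / 2 + - x = - (x / 2)) //; field.
Qed.

(* Dominated by x^s on ]0, 1] and by a multiple of the exponential density of
   rate 1/2 on ]1, +oo[. *)
Lemma integrable_powR_expRN s : -1 < s ->
  mu.-integrable `]0%R, +oo[ (fun x => (x `^ s * expR (- x))%:E).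
Proof.
move=> s_gtN1; have [C C_ge0 powR_le] := powR_expRN_le s.
pose g x := (fun y => y `^ s) \_ `]0%R, 1%R] x + 2 * C * exponential_pdf 2^-1 x.
have int_g : mu.-integrable setT (EFin \o g).
  have int_pow : mu.-integrable setT (EFin \o (fun y => y `^ s) \_ `]0%R, 1%R]).
    by rewrite -restrict_EFin -integrable_mkcond //; exact: integrable_powR_itvoc01.
  have int_exp : mu.-integrable setT (EFin \o exponential_pdf (2^-1 : R)).
    by apply: integrable_exponential_pdf; rewrite invr_gt0.
  apply: eq_integrable (integrableD _ int_pow (integrableZl _ (2 * C) int_exp)) => //.
apply: le_integrable (integrableS _ _ _ int_g) => //.
  apply/measurable_EFinP/measurable_funTS/measurable_funM.
    exact: measurable_powR.
  by apply: measurableT_comp => //; exact: measurable_funN.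
move=> x; rewrite /= in_itv /= andbT => x_gt0.
have exp_ge0 : 0 <= 2 * C * exponential_pdf 2^-1 x.
  by rewrite !mulr_ge0 ?exponential_pdf_ge0.
rewrite lee_fin /g patchE ger0_norm ?mulr_ge0 ?powR_ge0 ?expR_ge0 //.
have [x_le1|x_gt1] := leP x 1.
  rewrite mem_set /=; last by rewrite in_itv /= x_gt0 x_le1.
  rewrite ger0_norm ?addr_ge0 ?powR_ge0 // ler_wpDr // ger_pMr ?powR_gt0 //.
  by rewrite expR_le1 oppr_le0 ltW.
rewrite memNset /=; last by rewrite in_itv /= leNgt x_gt1 andbF.
rewrite add0r ger0_norm // exponential_pdfE ?(ltW x_gt0) //.
apply: le_trans (powR_le _ (ltW x_gt1)) _.
by rewrite [leRHS](_ : _ = C * expR (- (x / 2))) // mulNr [2^-1 * x]mulrC; field.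
Qed.

End GammaIntegrand.

Section ProductIntegrable.
Local Open Scope ereal_scope.
Context d1 d2 (T1 : measurableType d1) (T2 : measurableType d2) (R : realType).
Variables (m1 : {sigma_finite_measure set T1 -> \bar R})
  (m2 : {sigma_finite_measure set T2 -> \bar R}).

Lemma integrable_prodM (f : T1 -> R) (g : T2 -> R) :
  m1.-integrable setT (EFin \o f) -> m2.-integrable setT (EFin \o g) ->
  (m1 \x m2).-integrable setT (fun z => (f z.1 * g z.2)%:E).
Proof.
move=> /integrableP[/measurable_EFinP mf int_f_lty].
move=> /integrableP[/measurable_EFinP mg int_g_lty].
have measurable_normE (T : measurableType _) (u : T -> R) :
    measurable_fun setT u -> measurable_fun setT (fun t => `|u t|%:E).
  by move=> mu; apply/measurable_EFinP; exact: measurableT_comp mu.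
apply/integrable12ltyP.
  apply/measurable_EFinP/measurable_funM; apply: measurableT_comp => //.
under eq_integral => x _.
  under eq_integral do rewrite EFinM abseM /=.
  rewrite ge0_integralZl //; [over | exact: measurable_normE].
rewrite /= ge0_integralZr ?integral_ge0 //; last exact: measurable_normE.
by apply: lte_mul_pinfty int_g_lty; rewrite ?ge0_fin_numE ?integral_ge0.
Qed.

Lemma integrable_prodMX (A : set T1) (B : set T2) (f : T1 -> R) (g : T2 -> R) :
  measurable A -> measurable B ->
  m1.-integrable A (EFin \o f) -> m2.-integrable B (EFin \o g) ->
  (m1 \x m2).-integrable (A `*` B) (fun z => (f z.1 * g z.2)%:E).
Proof.
move=> mA mB; rewrite (integrable_mkcond _ mA) (integrable_mkcond _ mB).
rewrite (integrable_mkcond _ (measurableX mA mB)) !restrict_EFin.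
move=> /integrable_prodM /[apply]; apply: eq_integrable => // -[x y] _.
rewrite /= !patchE in_setX /=.
by case: (x \in A); case: (y \in B); rewrite /= ?mulr0 ?mul0r.
Qed.

End ProductIntegrable.

Section CauchyLaguerreIntegrals.
Context {R : realType}.
Variable a : R.
Hypothesis a_gtN1 : -1 < a.
Local Notation mu := (@lebesgue_measure R).
Local Notation RR := (measurableTypeR R * measurableTypeR R)%type.
Local Notation quadrant := (`]0%R, +oo[%classic `*` `]0%R, +oo[%classic : set RR).

Lemma measurable_quadrant : measurable quadrant.
Proof. exact: measurableX. Qed.
Local Hint Resolve measurable_quadrant : core.

(* The division is rewritten as a real power to get measurability from that of powR. *)
Lemma CLweightE x y : 0 < x -> 0 < y ->
  CLweight a x y = x `^ a * y `^ (a + 1) * expR (- x - y) * (x + y) `^ (-1).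
Proof. by move=> x_gt0 y_gt0; rewrite powR_inv1 // addr_ge0 ?ltW. Qed.

Lemma measurable_CLweight :
  measurable_fun quadrant (fun z => CLweight a z.1 z.2).
Proof.
apply: (eq_measurable_fun (fun z : RR => z.1 `^ a * z.2 `^ (a + 1) *
    expR (- z.1 - z.2) * (z.1 + z.2) `^ (-1))).
  by move=> [x y]; rewrite inE /= !in_itv /= !andbT => -[x_gt0 y_gt0]; rewrite CLweightE.
apply: measurable_funTS; apply: measurable_funM; first apply: measurable_funM.
- apply: measurable_funM; apply: measurableT_comp (measurable_powR _) _ => //.
- apply: measurableT_comp => //; apply: measurable_funB => //; exact: measurable_funN.
- apply: measurableT_comp (measurable_powR _) _; exact: measurable_funD.
Qed.

Lemma monomial_CLweightE (i j : nat) x y : 0 < x -> 0 < y ->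
  x ^+ i * y ^+ j * CLweight a x y =
  x `^ (a + i%:R) * expR (- x) * (y `^ (a + j%:R) * expR (- y)) * (y / (x + y)).
Proof.
move=> x_gt0 y_gt0; have xy_neq0 : x + y != 0 by rewrite gt_eqF ?addr_gt0.
rewrite /CLweight !powRD ?(gt_eqF x_gt0) ?(gt_eqF y_gt0) ?implybT //.
rewrite powRr1 ?ltW // expRD (powR_mulrn _ (ltW x_gt0)) (powR_mulrn _ (ltW y_gt0)).
by field.
Qed.

Lemma integrable_CLweight_monomial (i j : nat) :
  (@leb2 R).-integrable quadrant
    (fun z => (z.1 ^+ i * z.2 ^+ j * CLweight a z.1 z.2)%:E).
Proof.
have int_gamma (k : nat) :
    mu.-integrable `]0%R, +oo[ (EFin \o fun x => x `^ (a + k%:R) * expR (- x)).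
  by apply: integrable_powR_expRN; rewrite -[-1]addr0 ltr_leD.
apply: le_integrable (integrable_prodMX _ _ (int_gamma i) (int_gamma j)) => //.
  apply/measurable_EFinP/measurable_funM; last exact: measurable_CLweight.
  apply/measurable_funTS/measurable_funM; apply: measurable_funX => //.
move=> [x y]; rewrite /= !in_itv /= !andbT => -[x_gt0 y_gt0].
have [x_ge0 y_ge0] : 0 <= x /\ 0 <= y by split; exact: ltW.
have y_div_le1 : y / (x + y) <= 1 by rewrite ler_pdivrMr ?addr_gt0 // mul1r lerDr.
rewrite lee_fin monomial_CLweightE //.
rewrite !ger0_norm ?mulr_ge0 ?powR_ge0 ?expR_ge0 ?invr_ge0 ?addr_ge0 //.
by rewrite ler_piMr ?mulr_ge0 ?powR_ge0 ?expR_ge0.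
Qed.

Lemma integrable_CLweight_poly (P Q : {poly R}) :
  (@leb2 R).-integrable quadrant
    (fun z => (P.[z.1] * Q.[z.2] * CLweight a z.1 z.2)%:E).
Proof.
have int_sum n (G : 'I_n -> RR -> R) :
    (forall i, (@leb2 R).-integrable quadrant (EFin \o G i)) ->
    (@leb2 R).-integrable quadrant (fun z => (\sum_(i < n) G i z)%:E).
  move=> int_G.
  apply: eq_integrable (integrable_sum _ _ (fun i (_ : true) => int_G i)) => //.
  by move=> z _; rewrite sumEFin.
have int_expanded : (@leb2 R).-integrable quadrant (fun z => (\sum_(i < size P)
    \sum_(j < size Q) P`_i * Q`_j * (z.1 ^+ i * z.2 ^+ j * CLweight a z.1 z.2))%:E).
  apply: (int_sum) => i; apply: (int_sum) => j.
  have := integrableZl measurable_quadrant (P`_i * Q`_j) (integrable_CLweight_monomial i j).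
  exact: eq_integrable.
apply: eq_integrable int_expanded => // z _.
rewrite !horner_coef mulr_suml mulr_suml; congr EFin.
apply: eq_bigr => i _; rewrite mulr_sumr mulr_suml; apply: eq_bigr => j _; ring.
Qed.

Lemma CLint_lincomb c (P1 Q1 P2 Q2 : {poly R}) (f : R -> R -> R) :
  (forall x y, f x y = c * (P1.[x] * Q1.[y]) + P2.[x] * Q2.[y]) ->
  CLint a f =
    c * CLint a (fun x y => P1.[x] * Q1.[y]) + CLint a (fun x y => P2.[x] * Q2.[y]).
Proof.
move=> fE; rewrite /CLint -RintegralZl ?integrable_CLweight_poly //.
rewrite -RintegralD ?integrable_CLweight_poly //; last first.
  exact: integrableZl (integrable_CLweight_poly _ _).
by apply: eq_Rintegral => z _; rewrite fE mulrDl -mulrA.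
Qed.

Lemma CLint_linearl (Q : {poly R}) :
  linear_for *%R (fun P : {poly R} => CLint a (fun x y => P.[x] * Q.[y])).
Proof.
by move=> c P1 P2; apply: CLint_lincomb => x y; rewrite hornerD hornerZ mulrDl mulrA.
Qed.

Lemma CLint_linearr (P : {poly R}) :
  linear_for *%R (fun Q : {poly R} => CLint a (fun x y => P.[x] * Q.[y])).
Proof.
move=> c Q1 Q2; apply: CLint_lincomb => x y.
by rewrite hornerD hornerZ mulrDr mulrCA mulrA.
Qed.

End CauchyLaguerreIntegrals.

Local Close Scope classical_set_scope.

Theorem corollary1 (R : realType) (a : R) (ha : -1 < a)
  (p q : nat -> {poly R}) (h : nat -> R)
  (Hbio : CL_biorthogonal a p q h) :
  forall beta k j : nat,
    (h j)^-1 * CLint a (fun x y => x ^+ beta * (p k).[x] * (q j).[y]) =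
      \sum_(l < k.+1) (p k)`_l *
        bcoef (fun m i => (p m)`_i) (beta + l)%N ((beta + l)%:Z - j%:Z)
  /\
    (h j)^-1 * CLint a (fun x y => y ^+ beta * (p j).[x] * (q k).[y]) =
      \sum_(l < k.+1) (q k)`_l *
        bcoef (fun m i => (q m)`_i) (beta + l)%N ((beta + l)%:Z - j%:Z).
Proof.
case: Hbio => /all_and2[p_monic size_p] /all_and2[q_monic size_q] orth h_neq0 beta k j.
split.
- have -> : CLint a (fun x y => x ^+ beta * (p k).[x] * (q j).[y]) =
      CLint a (fun x y => ('X^beta * p k).[x] * (q j).[y]).
    by congr CLint; apply/funext => x; apply/funext => y; rewrite hornerM hornerXn.
  rewrite (lform_XnM p_monic size_p (CLint_linearl ha (q j)) (j := j) (h := h j)).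
    by rewrite mulrC mulfK.
  by move=> m; rewrite orth; case: eqP => // ->.
- have -> : CLint a (fun x y => y ^+ beta * (p j).[x] * (q k).[y]) =
      CLint a (fun x y => (p j).[x] * ('X^beta * q k).[y]).
    congr CLint; apply/funext => x; apply/funext => y.
    by rewrite hornerM hornerXn mulrCA mulrA.
  rewrite (lform_XnM q_monic size_q (CLint_linearr ha (p j)) (j := j) (h := h j)).
    by rewrite mulrC mulfK.
  by move=> m; rewrite orth eq_sym.
Qed.
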